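(* Under the setting below, assume $G$ is convex and the sampling in Algorithm BC is essentially cyclic: there exists $T\ge1$ such that every index $i\in[N]$ belongs to at least one of the sets $I^{k+1},\dots,I^{k+T}$ for every $k\ge0$. Then (surely): (i) $\sum_k\|\bm x^k-\bm z^k\|^2<\infty$; (ii) $\Phi(\bm z^k)\to\Phi_\star:=\lim_k\Phi^{\mathrm{FB}}_\Gamma(\bm x^k)$ (finite, $\ge\min\Phi$); (iii) $(\bm x^k)$ and $(\bm z^k)$ have the same cluster points, each such cluster point $\bm x^\star$ satisfies $0\in\hat\partial\Phi(\bm x^\star)$ and $\Phi(\bm x^\star)=\Phi^{\mathrm{FB}}_\Gamma(\bm x^\star)=\Phi_\star$.
   Context: Setting: $N\ge1$, $n=\sum_{i=1}^N n_i$, $\bm x=(x_1,\dots,x_N)$ with $x_i\in\mathbb R^{n_i}$; $\Phi=F+G$ with $F(\bm x)=\frac1N\sum_i f_i(x_i)$, each $f_i:\mathbb R^{n_i}\to\mathbb R$ differentiable with $L_{f_i}$-Lipschitz gradient, $G:\mathbb R^n\to\mathbb R\cup\{+\infty\}$ proper lsc, $\arg\min\Phi\ne\emptyset$. $\gamma_i\in(0,N/L_{f_i})$, $\Gamma=\operatorname{blockdiag}(\gamma_1I_{n_1},\dots,\gamma_NI_{n_N})$, $\|x\|_V^2=\langle x,Vx\rangle$, $\operatorname{prox}_G^{V}(u)=\arg\min_w\{G(w)+\frac12\|w-u\|_V^2\}$, $\mathbf T(\bm x)=\operatorname{prox}_G^{\Gamma^{-1}}(\bm x-\Gamma\nabla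 F(\bm x))$. Forward-backward envelope: $\Phi^{\mathrm{FB}}_\Gamma(\bm x):=\inf_{\bm w}\{F(\bm x)+\langle\nabla F(\bm x),\bm w-\bm x\rangle+G(\bm w)+\frac12\|\bm w-\bm x\|^2_{\Gamma^{-1}}\}$. Algorithm BC: given $\bm x^0\in\mathbb R^n$, for $k=0,1,\dots$: pick $\bm z^k\in\mathbf T(\bm x^k)$; select $I^{k+1}\subseteq[N]$; set $x_i^{k+1}=z_i^k$ for $i\in I^{k+1}$ and $x_i^{k+1}=x_i^k$ otherwise. $\hat\partial$ denotes the regular (Fréchet) subdifferential. *)

From Stdlib Require Import Reals.
From mathcomp Require Import all_boot.
Set Implicit Arguments.
Unset Strict Implicit.
Unset Printing Implicit Defensive.

Local Open Scope R_scope.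

Inductive ereal := EFin (r : R) | EPInf.

Definition ele (a b : ereal) : Prop :=
  match a, b with
  | _, EPInf => True
  | EPInf, EFin _ => False
  | EFin x, EFin y => x <= y
  end.

Definition rlt_e (r : R) (a : ereal) : Prop :=
  match a with EFin y => r < y | EPInf => True end.

Definition eplus (r : R) (a : ereal) : ereal :=
  match a with EFin y => EFin (r + y) | EPInf => EPInf end.

Definition vec (m : nat) := 'I_m -> R.
Definition fsum (m : nat) (F : 'I_m -> R) : R := \big[Rplus/0]_(j < m) F j.
Definition dotv (m : nat) (u v : vec m) : R := fsum (fun j => u j * v j).
Definition normv (m : nat) (u : vec m) : R := sqrt (dotv u u).
Definition addv (m : nat) (u v : vec m) : vec m := fun j => u j + v j.
Definition subv (m : nat) (u v : vec m) : vec m := fun j => u j - v j.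

Definition has_gradient (m : nat) (f : vec m -> R) (g : vec m -> vec m) : Prop :=
  forall x eps, 0 < eps -> exists delta, 0 < delta /\
    forall h : vec m, normv h < delta ->
      Rabs (f (addv x h) - f x - dotv (g x) h) <= eps * normv h.

Definition lipschitz (m : nat) (g : vec m -> vec m) (L : R) : Prop :=
  forall x y, normv (subv (g x) (g y)) <= L * normv (subv x y).

Definition bvec (N : nat) (n : 'I_N -> nat) := forall i : 'I_N, vec (n i).
Definition bdot N (n : 'I_N -> nat) (u v : bvec n) : R :=
  fsum (fun i => dotv (u i) (v i)).
Definition bsqnorm N (n : 'I_N -> nat) (u : bvec n) : R := bdot u u.
Definition bnorm N (n : 'I_N -> nat) (u : bvec n) : R := sqrt (bsqnorm u).
Definition bsub N (n : 'I_N -> nat) (u v : bvec n) : bvec n :=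
  fun i j => u i j - v i j.
Definition bcomb N (n : 'I_N -> nat) (t : R) (u v : bvec n) : bvec n :=
  fun i j => t * u i j + (1 - t) * v i j.
Definition bzero N (n : 'I_N -> nat) : bvec n := fun i j => 0.
(* ||u||^2_{Gamma^{-1}} with Gamma = blockdiag(gam_i I_{n_i}) *)
Definition bwsqnorm N (n : 'I_N -> nat) (gam : 'I_N -> R) (u : bvec n) : R :=
  fsum (fun i => / gam i * dotv (u i) (u i)).

Definition proper_fun N (n : 'I_N -> nat) (G : bvec n -> ereal) : Prop :=
  exists x r, G x = EFin r.
Definition lsc N (n : 'I_N -> nat) (G : bvec n -> ereal) : Prop :=
  forall x r, rlt_e r (G x) -> exists delta, 0 < delta /\
    forall y, bnorm (bsub y x) < delta -> rlt_e r (G y).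
Definition convex_fun N (n : 'I_N -> nat) (G : bvec n -> ereal) : Prop :=
  forall x y a b t, G x = EFin a -> G y = EFin b -> 0 <= t <= 1 ->
    ele (G (bcomb t x y)) (EFin (t * a + (1 - t) * b)).

Definition Fsum N (n : 'I_N -> nat) (f : forall i : 'I_N, vec (n i) -> R)
  (x : bvec n) : R := / INR N * fsum (fun i => f i (x i)).
Definition gradF N (n : 'I_N -> nat) (gf : forall i : 'I_N, vec (n i) -> vec (n i))
  (x : bvec n) : bvec n := fun i j => / INR N * gf i (x i) j.
Definition PhiF N (n : 'I_N -> nat) (f : forall i : 'I_N, vec (n i) -> R)
  (G : bvec n -> ereal) (x : bvec n) : ereal := eplus (Fsum f x) (G x).

Definition is_minimizer N (n : 'I_N -> nat) (H : bvec n -> ereal) (w : bvec n) : Prop :=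
  exists a, H w = EFin a /\ forall y, ele (EFin a) (H y).

(* w ∈ prox_G^{Gamma^{-1}}(u) = argmin_w { G(w) + 1/2 ||w - u||^2_{Gamma^{-1}} } *)
Definition in_prox N (n : 'I_N -> nat) (G : bvec n -> ereal) (gam : 'I_N -> R)
  (u w : bvec n) : Prop :=
  exists a, G w = EFin a /\
    forall w', ele (EFin (a + / 2 * bwsqnorm gam (bsub w u)))
                   (eplus (/ 2 * bwsqnorm gam (bsub w' u)) (G w')).

Definition fb_point N (n : 'I_N -> nat) (gf : forall i : 'I_N, vec (n i) -> vec (n i))
  (gam : 'I_N -> R) (x : bvec n) : bvec n :=
  fun i j => x i j - gam i * (gradF (n:=n) gf x) i j.

Definition in_T N (n : 'I_N -> nat) (gf : forall i : 'I_N, vec (n i) -> vec (n i))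
  (G : bvec n -> ereal) (gam : 'I_N -> R) (x z : bvec n) : Prop :=
  in_prox G gam (fb_point gf gam x) z.

Definition is_inf (E : R -> Prop) (m : R) : Prop :=
  (forall y, E y -> m <= y) /\
  (forall m', (forall y, E y -> m' <= y) -> m' <= m).

(* the values whose infimum is the forward-backward envelope at x
   (terms with G(w) = +oo do not affect the infimum) *)
Definition FBE_set N (n : 'I_N -> nat) (f : forall i : 'I_N, vec (n i) -> R)
  (gf : forall i : 'I_N, vec (n i) -> vec (n i)) (G : bvec n -> ereal)
  (gam : 'I_N -> R) (x : bvec n) (r : R) : Prop :=
  exists w g, G w = EFin g /\
    r = Fsum f x + bdot (gradF gf x) (bsub w x) + g + / 2 * bwsqnorm gam (bsub w x).

Definition is_FBE N (n : 'I_N -> nat) (f : forall i : 'I_N, vec (n i) -> R)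
  (gf : forall i : 'I_N, vec (n i) -> vec (n i)) (G : bvec n -> ereal)
  (gam : 'I_N -> R) (x : bvec n) (v : R) : Prop :=
  is_inf (FBE_set f gf G gam x) v.

(* v ∈ regular (Fréchet) subdifferential of H at x:
   H(x) finite and liminf_{y -> x, y <> x} (H y - H x - <v, y - x>)/||y - x|| >= 0 *)
Definition in_frechet_subdiff N (n : 'I_N -> nat) (H : bvec n -> ereal)
  (x v : bvec n) : Prop :=
  exists a, H x = EFin a /\
    forall eps, 0 < eps -> exists delta, 0 < delta /\
      forall y, bnorm (bsub y x) < delta ->
        ele (EFin (a + bdot v (bsub y x) - eps * bnorm (bsub y x))) (H y).

Definition cluster_point N (n : 'I_N -> nat) (s : nat -> bvec n) (c : bvec n) : Prop :=
  forall eps, 0 < eps -> forall M : nat, exists k : nat, (M <= k)%nat /\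
    bnorm (bsub (s k) c) < eps.

(* For z in T(x), the forward-backward envelope at x equals  model x z + G(z),
   where  model x w = F(x) + <grad F(x), w - x> + 1/2 ||w - x||^2_{Gamma^-1}
   is block-separable.  By the descent lemma each block of the model lies
   between F(w) + c_i ||w_i - x_i||^2 and F(w) + C_i ||w_i - x_i||^2, with
   c_i > 0 exactly because gamma_i L_i < N.  Hence every iteration decreases
   the envelope by at least cmin ||x^{k+1} - x^k||^2, so the steps are
   summable; since the prox of a convex G is nonexpansive, T is Lipschitz,
   and essentially cyclic sampling bounds ||x^k - z^k||^2 by the steps in a
   window of length T, giving (i).  The envelope values decrease to a limit
   that Phi(z^k) shares (ii).  At a cluster point c, lower semicontinuity of G
   and continuity of the smooth terms pass the prox inequality to the limit:
   c = T(c), which gives the values in (iii) and, with the upper bound of the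
   model, stationarity. *)

From Stdlib Require Import Reals Lra Psatz FunctionalExtensionality.
From mathcomp Require Import all_boot.
From HB Require Import structures.

Local Open Scope R_scope.

(* [fsum] is a big operator over [Rplus], which needs the monoid structure. *)
Lemma Rplus_associative : associative Rplus.
Proof. by move=> a b c; rewrite Rplus_assoc. Qed.
HB.instance Definition _ :=
  Monoid.isComLaw.Build R R0 Rplus Rplus_associative Rplus_comm Rplus_0_l.

Lemma fsum_ext {m} (F G : 'I_m -> R) : (forall j, F j = G j) -> fsum F = fsum G.
Proof. by move=> H; apply: eq_bigr => j _. Qed.

Lemma fsum_plus {m} (F G : 'I_m -> R) : fsum (fun j => F j + G j) = fsum F + fsum G.
Proof. by rewrite /fsum big_split. Qed.

Lemma fsum_scal {m} c (F : 'I_m -> R) : fsum (fun j => c * F j) = c * fsum F.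
Proof. rewrite /fsum; elim/big_rec2: _ => [|i y1 y2 _ ->]; ring. Qed.

Lemma fsum_minus {m} (F G : 'I_m -> R) : fsum F - fsum G = fsum (fun j => F j - G j).
Proof.
have -> : fsum F - fsum G = fsum F + (-1) * fsum G by ring.
by rewrite -fsum_scal -fsum_plus; apply: fsum_ext => j; ring.
Qed.

Lemma fsum_zero {m} : fsum (fun _ : 'I_m => 0) = 0.
Proof. by rewrite /fsum big1. Qed.

Lemma fsum_le {m} (F G : 'I_m -> R) : (forall j, F j <= G j) -> fsum F <= fsum G.
Proof.
move=> H; rewrite /fsum; elim/big_rec2: _ => [|i y1 y2 _ Hy]; first lra.
have := H i; lra.
Qed.

Lemma fsum_nonneg {m} (F : 'I_m -> R) : (forall j, 0 <= F j) -> 0 <= fsum F.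
Proof. by move=> H; rewrite -(@fsum_zero m); apply: fsum_le. Qed.

Lemma fsum_ge_term {m} (F : 'I_m -> R) i : (forall j, 0 <= F j) -> F i <= fsum F.
Proof.
move=> H; rewrite /fsum (bigD1 i) //=.
have : 0 <= \big[Rplus/0]_(j < m | j != i) F j.
  elim/big_rec: _ => [|k y _ Hy]; first lra.
  by have := H k; lra.
move=> Hrest; rewrite -{1}(Rplus_0_r (F i)); exact: Rplus_le_compat_l.
Qed.

Lemma fsum_bound {m} (F : 'I_m -> R) C : (forall j, F j <= C) -> fsum F <= INR m * C.
Proof.
move=> H; rewrite /fsum; elim: m F H => [|m IH] F H; first by rewrite big_ord0 /=; lra.
rewrite S_INR big_ord_recr /=.
apply: (Rle_trans _ (INR m * C + C)); last lra.
apply: Rplus_le_compat; last exact: H.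
exact: (IH (fun i => F (widen_ord (leqnSn m) i)) (fun j => H _)).
Qed.

Lemma fsum_abs {m} (F : 'I_m -> R) : Rabs (fsum F) <= fsum (fun j => Rabs (F j)).
Proof.
apply: Rabs_le; split; last by apply: fsum_le => j; exact: Rle_abs.
have := @fsum_le m (fun _ => 0) (fun j => F j + Rabs (F j)).
rewrite fsum_plus fsum_zero => H.
have : 0 <= fsum F + fsum (fun j => Rabs (F j)).
  by apply: H => j; have := Rle_abs (- F j); rewrite Rabs_Ropp; lra.
lra.
Qed.

(* Collect differences, multiples and sums of [fsum]s into a single [fsum],
   so that blockwise identities reduce to identities between the terms. *)
Ltac fsum_collect := repeat progress (rewrite ?fsum_minus -?fsum_scal -?fsum_plus).

Lemma young2 e a b : 0 < e -> 2 * (a * b) <= e * (a * a) + / e * (b * b).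
Proof.
move=> He.
have Hsq : e * (e * (a * a) + / e * (b * b) - 2 * (a * b)) = (e * a - b) * (e * a - b).
  by field; lra.
have : 0 <= e * (a * a) + / e * (b * b) - 2 * (a * b).
  by apply: (Rmult_le_reg_l e) => //; rewrite Rmult_0_r Hsq; exact: Rle_0_sqr.
lra.
Qed.

Lemma sq_tri e a b c : 0 < e ->
  (a - c) * (a - c) <= (1 + e) * ((a - b) * (a - b)) + (1 + / e) * ((b - c) * (b - c)).
Proof. move=> He; have := young2 e (a - b) (b - c) He; nra. Qed.

Lemma scaled_lt C e : 0 <= C -> 0 < e -> C * (e / (C + 1)) < e.
Proof.
move=> HC He.
have -> : C * (e / (C + 1)) = e - e / (C + 1) by field; lra.
have : 0 < e / (C + 1) by apply: Rdiv_lt_0_compat; lra.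
lra.
Qed.

Lemma le_of_small_perturbation A B C : (forall t, 0 < t <= 1 -> A <= B + t * C) -> A <= B.
Proof.
move=> H; apply: Rnot_lt_le => HBA.
have HC := Rabs_pos C.
set t := Rmin 1 ((A - B) / (Rabs C + 1)).
have Hq : 0 < (A - B) / (Rabs C + 1) by apply: Rdiv_lt_0_compat; lra.
have Ht0 : 0 < t by apply: Rmin_glb_lt; lra.
have Ht1 : t <= 1 by apply: Rmin_l.
have HtC : t * C <= Rabs C * ((A - B) / (Rabs C + 1)).
  have := Rmin_r 1 ((A - B) / (Rabs C + 1)); have := RRle_abs C; rewrite -/t; nra.
have := scaled_lt (Rabs C) (A - B) HC ltac:(lra).
have := H t (conj Ht0 Ht1); lra.
Qed.

Lemma eq_of_close X Y : (forall eps, 0 < eps -> Rabs (X - Y) < eps) -> X = Y.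
Proof.
move=> H; case: (Req_dec X Y) => // Hne.
have Hp : 0 < Rabs (X - Y) by apply: Rabs_pos_lt; lra.
by have := H _ Hp; lra.
Qed.

Lemma Un_cv_const a : Un_cv (fun _ => a) a.
Proof. by move=> eps He; exists 0%nat => k _; rewrite /R_dist Rminus_diag Rabs_R0. Qed.

Lemma Un_cv_squeeze (u v w : nat -> R) l :
  (forall k, u k <= v k <= w k) -> Un_cv u l -> Un_cv w l -> Un_cv v l.
Proof.
move=> Hb Hu Hw eps He.
have [N1 H1] := Hu eps He; have [N2 H2] := Hw eps He.
exists (N1 + N2)%coq_nat => k Hk.
have := H1 k ltac:(lia); have := H2 k ltac:(lia); have := Hb k.
rewrite /R_dist => Hk' /Rabs_def2 [? ?] /Rabs_def2 [? ?].
apply: Rabs_def1; lra.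
Qed.

Fixpoint psum (a : nat -> R) (m : nat) : R :=
  match m with O => 0 | S m' => psum a m' + a m' end.

Lemma sum_f_psum a K : sum_f_R0 a K = psum a (S K).
Proof. by elim: K => [|K IH] /=; [ring | rewrite IH]. Qed.

Lemma psum_ext a b m : (forall k, a k = b k) -> psum a m = psum b m.
Proof. by move=> H; elim: m => [|m IH] //=; rewrite IH H. Qed.

Lemma psum_le a b m : (forall k, a k <= b k) -> psum a m <= psum b m.
Proof. move=> H; elim: m => [|m IH] /=; first lra. by have := H m; lra. Qed.

Lemma psum_nonneg a m : (forall k, 0 <= a k) -> 0 <= psum a m.
Proof. move=> H; elim: m => [|m IH] /=; first lra. by have := H m; lra. Qed.

Lemma psum_mono a m m' : (forall k, 0 <= a k) -> (m <= m')%N -> psum a m <= psum a m'.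
Proof.
move=> H; elim: m' => [|m' IH]; first by rewrite leqn0 => /eqP ->; lra.
rewrite leq_eqVlt => /orP [/eqP -> | Hlt]; first lra.
by have := IH Hlt; have := H m' => /=; lra.
Qed.

Lemma psum_plus a b m : psum (fun k => a k + b k) m = psum a m + psum b m.
Proof. by elim: m => [|m IH] /=; [ring | rewrite IH; ring]. Qed.

Lemma psum_scal c a m : psum (fun k => c * a k) m = c * psum a m.
Proof. by elim: m => [|m IH] /=; [ring | rewrite IH; ring]. Qed.

Lemma psum_const c m : psum (fun _ => c) m = INR m * c.
Proof. by elim: m => [|m IH]; [rewrite /=; ring | rewrite S_INR /= IH; ring]. Qed.

Lemma psum_swap (a : nat -> nat -> R) K T :
  psum (fun k => psum (a k) T) K = psum (fun s => psum (fun k => a k s) K) T.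
Proof.
elim: K => [|K IH] /=; first by rewrite psum_const; ring.
by rewrite IH -psum_plus.
Qed.

Lemma psum_telescope (b : nat -> R) s K :
  psum (fun k => b (k + s)%N - b (S (k + s))) K = b s - b (K + s)%N.
Proof. by elim: K => [|K IH] /=; [rewrite add0n; ring | rewrite IH addSn; ring]. Qed.

Lemma series_terms_to0 (a : nat -> R) l : Un_cv (fun K => sum_f_R0 a K) l -> Un_cv a 0.
Proof.
move=> H eps He.
have [N0 HN0] := H (eps / 2) ltac:(lra).
exists (S N0) => [[|m]] Hk; first lia.
have := HN0 m ltac:(lia); have := HN0 m.+1 ltac:(lia).
rewrite /R_dist /= Rminus_0_r => /Rabs_def2 [? ?] /Rabs_def2 [? ?].
apply: Rabs_def1; lra.
Qed.

(* A quantity bounded by e A + (1 + 1/e) B D for every e > 0 is small as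
   soon as D is small: the form in which all continuity estimates arise. *)
Lemma small_of_modulus {X : Type} (E D : X -> R) A B :
  0 <= A -> 0 <= B -> (forall y, 0 <= D y) ->
  (forall e y, 0 < e -> E y <= e * A + (1 + / e) * B * D y) ->
  forall eps, 0 < eps -> exists d, 0 < d /\ forall y, D y < d -> E y < eps.
Proof.
move=> HA HB HD HE eps Heps.
set e := eps / 2 / (A + 1).
have He : 0 < e by apply: Rdiv_lt_0_compat; lra.
have HeA : e * A < eps / 2 by rewrite Rmult_comm; apply: scaled_lt => //; lra.
set K := (1 + / e) * B.
have HK : 0 <= K by apply: Rmult_le_pos => //; have := Rinv_0_lt_compat _ He; lra.
exists (eps / 2 / (K + 1)); split; first by apply: Rdiv_lt_0_compat; lra.
move=> y Hy; have := HE e y He; rewrite -/K.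
have : K * D y <= K * (eps / 2 / (K + 1)) by apply: Rmult_le_compat_l; lra.
have := scaled_lt K (eps / 2) HK ltac:(lra); lra.
Qed.

(** * Vectors of R^m and the descent lemma *)

Lemma subv_self {m} (v : vec m) : subv v v = (fun _ => 0).
Proof. by apply: functional_extensionality => j; rewrite /subv; ring. Qed.

Lemma dotv_nonneg {m} (u : vec m) : 0 <= dotv u u.
Proof. apply: fsum_nonneg => j; nra. Qed.

Lemma dotv_zero_r {m} (u : vec m) : dotv u (fun _ => 0) = 0.
Proof. by rewrite /dotv -[RHS](@fsum_zero m); apply: fsum_ext => j; ring. Qed.

Lemma dotv_scal_l {m} c (u v : vec m) : dotv (fun j => c * u j) v = c * dotv u v.
Proof. by rewrite /dotv -fsum_scal; apply: fsum_ext => j; ring. Qed.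

Lemma dotv_scal_r {m} c (u v : vec m) : dotv u (fun j => c * v j) = c * dotv u v.
Proof. by rewrite /dotv -fsum_scal; apply: fsum_ext => j; ring. Qed.

Lemma dotv_sub_l {m} (a b h : vec m) : dotv (subv a b) h = dotv a h - dotv b h.
Proof. by rewrite /dotv fsum_minus; apply: fsum_ext => j; rewrite /subv; ring. Qed.

Lemma dotv_zero_l {m} (a h : vec m) : dotv a a <= 0 -> dotv a h = 0.
Proof.
move=> H; rewrite -(dotv_zero_r h) /dotv; apply: fsum_ext => j.
have Haj : a j * a j <= 0.
  by apply: Rle_trans H; apply: (fsum_ge_term (fun j => a j * a j)) => k; nra.
have -> : a j = 0 by nra.
ring.
Qed.

Lemma dotv_young {m} e (u v : vec m) : 0 < e ->
  2 * dotv u v <= e * dotv u u + / e * dotv v v.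
Proof.
move=> He; rewrite /dotv; fsum_collect; apply: fsum_le => j; exact: young2.
Qed.

Lemma dotv_young_abs {m} e (u v : vec m) : 0 < e ->
  2 * Rabs (dotv u v) <= e * dotv u u + / e * dotv v v.
Proof.
move=> He.
have Hneg : dotv (fun j => -1 * u j) (fun j => -1 * u j) = dotv u u.
  by rewrite dotv_scal_l dotv_scal_r; ring.
have := dotv_young e (fun j => -1 * u j) v He; rewrite dotv_scal_l Hneg.
have := dotv_young e u v He.
by case: (Rle_lt_dec 0 (dotv u v)) => Hs; [rewrite Rabs_right | rewrite Rabs_left]; lra.
Qed.

Lemma dotv_tri {m} e (a b c : vec m) : 0 < e ->
  dotv (subv a c) (subv a c) <=
  (1 + e) * dotv (subv a b) (subv a b) + (1 + / e) * dotv (subv b c) (subv b c).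
Proof. move=> He; rewrite /dotv; fsum_collect; apply: fsum_le => j; exact: sq_tri. Qed.

Lemma normv_nonneg {m} (u : vec m) : 0 <= normv u.
Proof. exact: sqrt_pos. Qed.

Lemma normv_sq {m} (u : vec m) : normv u * normv u = dotv u u.
Proof. by rewrite /normv sqrt_sqrt //; exact: dotv_nonneg. Qed.

Lemma normv_scal {m} s (h : vec m) : normv (fun j => s * h j) = Rabs s * normv h.
Proof.
rewrite /normv dotv_scal_l dotv_scal_r -Rmult_assoc sqrt_mult_alt; last nra.
by rewrite -Rsqr_def sqrt_Rsqr_abs.
Qed.

Lemma lipschitz_sq {m} (g : vec m -> vec m) L x y : 0 <= L -> lipschitz g L ->
  dotv (subv (g x) (g y)) (subv (g x) (g y)) <= L * L * dotv (subv x y) (subv x y).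
Proof.
move=> HL Hl; rewrite -!normv_sq; have := Hl x y.
have := normv_nonneg (subv (g x) (g y)); have := normv_nonneg (subv x y); nra.
Qed.

Lemma dotv_le_of_sq {m} (a h : vec m) K : 0 <= K ->
  dotv a a <= K * K * dotv h h -> dotv a h <= K * dotv h h.
Proof.
move=> HK H; have HQ := dotv_nonneg h.
case: (Req_dec K 0) => [HK0|HK0].
  by rewrite dotv_zero_l; [nra | rewrite HK0 in H; lra].
have HKp : 0 < K by lra.
have := dotv_young (/ K) a h (Rinv_0_lt_compat _ HKp); rewrite Rinv_inv.
have : / K * dotv a a <= K * dotv h h.
  apply: (Rmult_le_reg_l K) => //; rewrite -Rmult_assoc Rinv_r; nra.
lra.
Qed.

Lemma line_derivative {m} (f : vec m -> R) g (x h : vec m) t : has_gradient f g ->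
  derivable_pt_lim (fun t => f (fun j => x j + t * h j)) t
     (dotv (g (fun j => x j + t * h j)) h).
Proof.
move=> Hg eps Heps.
have Hnh := normv_nonneg h.
set p : vec m := fun j => x j + t * h j.
have [delta [Hdel Hd]] := Hg p (eps / (normv h + 1)) ltac:(apply: Rdiv_lt_0_compat; lra).
have Hdp : 0 < delta / (normv h + 1) by apply: Rdiv_lt_0_compat; lra.
exists (mkposreal _ Hdp) => s Hs0 /= Hs.
have Has : 0 < Rabs s by apply: Rabs_pos_lt.
have Hsmall : Rabs s * (normv h + 1) < delta.
  have := Rmult_lt_compat_r (normv h + 1) _ _ ltac:(lra) Hs.
  by have -> : delta / (normv h + 1) * (normv h + 1) = delta by field; lra.
have := Hd (fun j => s * h j) ltac:(rewrite normv_scal; nra).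
have -> : addv p (fun j => s * h j) = (fun j => x j + (t + s) * h j).
  by apply: functional_extensionality => j; rewrite /addv /p; ring.
rewrite dotv_scal_r normv_scal => Hrem.
set A := f (fun j => x j + (t + s) * h j) - f p - s * dotv (g p) h in Hrem.
have -> : (f (fun j => x j + (t + s) * h j) - f p) / s - dotv (g p) h = A * / s.
  by rewrite /A; field.
rewrite Rabs_mult Rabs_inv.
have HA : Rabs A * / Rabs s <= normv h * (eps / (normv h + 1)).
  apply: (Rmult_le_reg_r (Rabs s)) => //.
  rewrite Rmult_assoc Rinv_l; nra.
have := scaled_lt (normv h) eps Hnh Heps; lra.
Qed.

Lemma quadratic_derivative a b t :
  derivable_pt_lim (fun t => a * t + b * (t * t)) t (a + 2 * b * t).
Proof.
have Hid := derivable_pt_lim_id t.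
have H := derivable_pt_lim_plus _ _ t _ _ (derivable_pt_lim_scal _ a t _ Hid)
  (derivable_pt_lim_scal _ b t _ (derivable_pt_lim_mult _ _ t _ _ Hid Hid)).
have -> : a + 2 * b * t = a * 1 + b * (1 * id t + id t * 1) by rewrite /id; ring.
exact: H.
Qed.

Lemma descent_upper {m} (f : vec m -> R) g L : has_gradient f g -> 0 <= L -> lipschitz g L ->
  forall x y, f y <= f x + dotv (g x) (subv y x) + L / 2 * dotv (subv y x) (subv y x).
Proof.
move=> Hg HL Hl x y.
set h := subv y x; set Q := dotv h h; set D0 := dotv (g x) h.
have HQ : 0 <= Q := dotv_nonneg h.
pose p t : vec m := fun j => x j + t * h j.
pose psi t := f (p t) - (D0 * t + L / 2 * Q * (t * t)).
pose psi' t := dotv (g (p t)) h - (D0 + 2 * (L / 2 * Q) * t).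
have Hd : forall t, derivable_pt_lim psi t (psi' t).
  move=> t; exact: derivable_pt_lim_minus (line_derivative _ _ x h t Hg)
    (quadratic_derivative D0 (L / 2 * Q) t).
have [c [Hc1 Hc2]] := MVT_cor2 psi psi' 0 1 Rlt_0_1 (fun c _ => Hd c).
have Hp1 : p 1 = y by apply: functional_extensionality => j; rewrite /p /h /subv; ring.
have Hp0 : p 0 = x by apply: functional_extensionality => j; rewrite /p; ring.
have Hneg : psi' c <= 0.
  have Hpc : subv (p c) x = (fun j => c * h j).
    by apply: functional_extensionality => j; rewrite /subv /p; ring.
  have Hlip := lipschitz_sq g L (p c) x HL Hl.
  rewrite Hpc dotv_scal_l dotv_scal_r -/Q in Hlip.
  have Hsq : dotv (subv (g (p c)) (g x)) (subv (g (p c)) (g x)) <= L * c * (L * c) * Q.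
    by apply: (Rle_trans _ _ _ Hlip); right; ring.
  have := dotv_le_of_sq (subv (g (p c)) (g x)) h (L * c) ltac:(nra) Hsq.
  rewrite dotv_sub_l -/D0 -/Q /psi'; lra.
move: Hc1; rewrite /psi Hp1 Hp0; nra.
Qed.

(* The matching lower bound, obtained by applying the descent lemma to -f. *)
Lemma descent_lower {m} (f : vec m -> R) g L : has_gradient f g -> 0 <= L -> lipschitz g L ->
  forall x y, f x + dotv (g x) (subv y x) - L / 2 * dotv (subv y x) (subv y x) <= f y.
Proof.
move=> Hg HL Hl x y.
have Hgneg : has_gradient (fun v => - f v) (fun v j => -1 * g v j).
  move=> u eps He; have [d [Hd Hh]] := Hg u eps He.
  exists d; split => // k Hk; rewrite dotv_scal_l -Rabs_Ropp.
  have -> : - (- f (addv u k) - - f u - -1 * dotv (g u) k) =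
    f (addv u k) - f u - dotv (g u) k by ring.
  exact: Hh.
have Hlneg : lipschitz (fun v j => -1 * g v j) L.
  move=> u v; apply: Rle_trans (Hl u v); right; rewrite /normv; congr sqrt.
  by apply: fsum_ext => j; rewrite /subv; ring.
have := descent_upper _ _ _ Hgneg HL Hlneg x y; rewrite dotv_scal_l; lra.
Qed.

Lemma smooth_change_bound {m} (f : vec m -> R) g L e x y :
  has_gradient f g -> 0 <= L -> lipschitz g L -> 0 < e ->
  Rabs (f y - f x) <= e * dotv (g x) (g x) + (/ e + L) * dotv (subv y x) (subv y x).
Proof.
move=> Hg HL Hl He.
have Hup := descent_upper f g L Hg HL Hl x y.
have Hlow := descent_lower f g L Hg HL Hl x y.
have Hy := dotv_young_abs e (g x) (subv y x) He.
have Hg0 := dotv_nonneg (g x); have Hh0 := dotv_nonneg (subv y x).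
have Hie := Rinv_0_lt_compat _ He.
have Habs := Rle_abs (dotv (g x) (subv y x)).
have Habs' : - dotv (g x) (subv y x) <= Rabs (dotv (g x) (subv y x)).
  by rewrite -Rabs_Ropp; exact: Rle_abs.
apply: Rabs_le; split; nra.
Qed.

Section BlockNorms.
Context {N : nat} {n : 'I_N -> nat}.
Implicit Types u v a b c : bvec n.

Lemma bsq_nonneg u : 0 <= bsqnorm u.
Proof. apply: fsum_nonneg => i; exact: dotv_nonneg. Qed.

Lemma bnorm_nonneg u : 0 <= bnorm u.
Proof. exact: sqrt_pos. Qed.

Lemma bnorm_sq u : bnorm u * bnorm u = bsqnorm u.
Proof. by rewrite /bnorm sqrt_sqrt //; exact: bsq_nonneg. Qed.

Lemma bnorm_lt_iff u eps : 0 < eps -> (bnorm u < eps <-> bsqnorm u < eps * eps).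
Proof.
move=> He; have H0 := bsq_nonneg u; have Hb := bnorm_nonneg u.
rewrite -bnorm_sq; split => H; first nra.
apply: Rnot_le_lt => Hle; have : eps * eps <= bnorm u * bnorm u by nra.
lra.
Qed.

Lemma block_le_bsq u i : dotv (u i) (u i) <= bsqnorm u.
Proof. apply: (fsum_ge_term (fun i => dotv (u i) (u i))) => j; exact: dotv_nonneg. Qed.

Lemma bsq_self a : bsqnorm (bsub a a) = 0.
Proof.
rewrite /bsqnorm /bdot -[RHS](@fsum_zero N); apply: fsum_ext => i.
by change (@bsub N n a a i) with (subv (a i) (a i)); rewrite subv_self dotv_zero_r.
Qed.

Lemma bsq_sym a b : bsqnorm (bsub a b) = bsqnorm (bsub b a).
Proof. by apply: fsum_ext => i; apply: fsum_ext => j; rewrite /bsub; ring. Qed.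

Lemma bsq_tri e a b c : 0 < e ->
  bsqnorm (bsub a c) <= (1 + e) * bsqnorm (bsub a b) + (1 + / e) * bsqnorm (bsub b c).
Proof. move=> He; rewrite /bsqnorm /bdot; fsum_collect; apply: fsum_le => i; exact: dotv_tri. Qed.

Lemma bsq_tri2 a b c : bsqnorm (bsub a c) <= 2 * bsqnorm (bsub a b) + 2 * bsqnorm (bsub b c).
Proof. by have := bsq_tri 1 a b c Rlt_0_1; rewrite Rinv_1; lra. Qed.

Lemma bdot_zero_l u : bdot (@bzero N n) u = 0.
Proof.
rewrite /bdot -[RHS](@fsum_zero N); apply: fsum_ext => i.
by rewrite -[RHS](@fsum_zero (n i)); apply: fsum_ext => j; rewrite /bzero; ring.
Qed.

Lemma bsub_cancel_r a b c : bsub (bsub a c) (bsub b c) = bsub a b.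
Proof.
by apply: functional_extensionality_dep => i; apply: functional_extensionality => j;
  rewrite /bsub; ring.
Qed.

Lemma bsub_cancel_l a b c : bsub (bsub a b) (bsub a c) = bsub c b.
Proof.
by apply: functional_extensionality_dep => i; apply: functional_extensionality => j;
  rewrite /bsub; ring.
Qed.

Variable gam : 'I_N -> R.
Hypothesis gam_pos : forall i, 0 < gam i.

Definition wdot u v : R := fsum (fun i => / gam i * dotv (u i) (v i)).

Lemma invgam_pos i : 0 < / gam i.
Proof. exact: Rinv_0_lt_compat. Qed.

Lemma bw_nonneg u : 0 <= bwsqnorm gam u.
Proof.
apply: fsum_nonneg => i; apply: Rmult_le_pos; [exact: Rlt_le (invgam_pos i) | exact: dotv_nonneg].
Qed.

Lemma bw_le_bsq u : bwsqnorm gam u <= fsum (fun i => / gam i) * bsqnorm u.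
Proof.
rewrite /bsqnorm /bdot -fsum_scal; apply: fsum_le => i.
apply: Rmult_le_compat_r; first exact: dotv_nonneg.
by apply: (fsum_ge_term (fun i => / gam i)) => j; exact: Rlt_le (invgam_pos j).
Qed.

Lemma bsq_le_bw u : bsqnorm u <= fsum gam * bwsqnorm gam u.
Proof.
rewrite /bwsqnorm -fsum_scal; apply: fsum_le => i.
have Hi := gam_pos i; have H2 := dotv_nonneg (u i).
have H1 : gam i <= fsum gam by apply: (fsum_ge_term gam) => j; exact: Rlt_le (gam_pos j).
have -> : fsum gam * (/ gam i * dotv (u i) (u i)) = fsum gam / gam i * dotv (u i) (u i).
  by rewrite /Rdiv; ring.
rewrite -{1}(Rmult_1_l (dotv _ _)); apply: Rmult_le_compat_r => //.
apply: (Rmult_le_reg_r (gam i)) => //; rewrite Rmult_1_l /Rdiv Rmult_assoc Rinv_l; lra.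
Qed.

Lemma wdot_young_abs e u v : 0 < e ->
  2 * Rabs (wdot u v) <= / e * bwsqnorm gam u + e * bwsqnorm gam v.
Proof.
move=> He; apply: Rle_trans (Rmult_le_compat_l 2 _ _ ltac:(lra) (fsum_abs _)) _.
rewrite /bwsqnorm; fsum_collect; apply: fsum_le => i.
have := dotv_young_abs (/ e) (u i) (v i) (Rinv_0_lt_compat _ He); rewrite Rinv_inv.
rewrite Rabs_mult (Rabs_pos_eq (/ gam i)); last exact: Rlt_le (invgam_pos i).
have := invgam_pos i; nra.
Qed.

Lemma bw_expand t (z1 z2 u1 : bvec n) :
  bwsqnorm gam (bsub (bcomb t z2 z1) u1) = bwsqnorm gam (bsub z1 u1) +
    2 * t * wdot (bsub z1 u1) (bsub z2 z1) + t * t * bwsqnorm gam (bsub z2 z1).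
Proof.
rewrite /bwsqnorm /wdot; fsum_collect; apply: fsum_ext => i.
by rewrite /dotv; fsum_collect; apply: fsum_ext => j; rewrite /bsub /bcomb; ring.
Qed.

(* The identity that combines the two variational inequalities of the prox. *)
Lemma wdot_cross (z1 z2 u1 u2 : bvec n) :
  wdot (bsub z1 u1) (bsub z2 z1) + wdot (bsub z2 u2) (bsub z1 z2) =
  wdot (bsub u1 u2) (bsub z1 z2) - bwsqnorm gam (bsub z1 z2).
Proof.
rewrite /bwsqnorm /wdot; fsum_collect; apply: fsum_ext => i.
by rewrite /dotv; fsum_collect; apply: fsum_ext => j; rewrite /bsub; ring.
Qed.

Lemma bw_change_bound e a b : 0 < e ->
  Rabs (bwsqnorm gam a - bwsqnorm gam b) <=
  e * bwsqnorm gam b + (1 + / e) * bwsqnorm gam (bsub a b).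
Proof.
move=> He.
have -> : bwsqnorm gam a - bwsqnorm gam b = bwsqnorm gam (bsub a b) + 2 * wdot (bsub a b) b.
  rewrite /bwsqnorm /wdot; fsum_collect; apply: fsum_ext => i.
  by rewrite /dotv; fsum_collect; apply: fsum_ext => j; rewrite /bsub; ring.
have := wdot_young_abs e (bsub a b) b He; have := bw_nonneg (bsub a b).
have := Rabs_triang (bwsqnorm gam (bsub a b)) (2 * wdot (bsub a b) b).
rewrite Rabs_mult (Rabs_pos_eq 2) ?(Rabs_pos_eq (bwsqnorm gam (bsub a b))); try lra.
exact: bw_nonneg.
Qed.

End BlockNorms.

Lemma near_both {N} {n : 'I_N -> nat} (a b : nat -> bvec n) c :
  Un_cv (fun k => bsqnorm (bsub (a k) (b k))) 0 -> cluster_point a c ->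
  forall d, 0 < d -> forall M : nat, exists k, (M <= k)%N /\
    bsqnorm (bsub (a k) c) < d /\ bsqnorm (bsub (b k) c) < d.
Proof.
move=> Hr Hcl d Hd M.
have [M1 HM1] := Hr (d / 4) ltac:(lra).
have Hs : 0 < sqrt (d / 4) by apply: sqrt_lt_R0; lra.
have [k [Hk Hak]] := Hcl _ Hs (maxn M M1).
exists k; split; first exact: leq_trans (leq_maxl M M1) Hk.
have Hk1 : (M1 <= k)%coq_nat by apply/leP; exact: leq_trans (leq_maxr M M1) Hk.
have := HM1 k Hk1; rewrite /R_dist Rminus_0_r => /Rabs_def2 [Hab _].
move/(bnorm_lt_iff _ _ Hs): Hak; rewrite sqrt_sqrt; last lra.
have := bsq_tri2 (b k) (a k) c; rewrite (bsq_sym (b k) (a k)).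
by split; lra.
Qed.

Lemma cluster_transfer {N} {n : 'I_N -> nat} (a b : nat -> bvec n) c :
  Un_cv (fun k => bsqnorm (bsub (a k) (b k))) 0 -> cluster_point a c -> cluster_point b c.
Proof.
move=> Hr Hcl eps He M.
have [k [Hk [_ Hb]]] := near_both a b c Hr Hcl (eps * eps) ltac:(nra) M.
by exists k; split => //; apply/(bnorm_lt_iff _ _ He).
Qed.

Lemma bsq_path_bound {N} {n : 'I_N -> nat} (y : nat -> bvec n) m :
  bsqnorm (bsub (y m) (y 0%N)) <= INR m * psum (fun s => bsqnorm (bsub (y (S s)) (y s))) m.
Proof.
set P := psum (fun s => bsqnorm (bsub (y (S s)) (y s))).
elim: m => [|m IH]; first by rewrite bsq_self /=; lra.
have HPm : 0 <= P m by apply: psum_nonneg => s; exact: bsq_nonneg.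
have Hd := bsq_nonneg (bsub (y (S m)) (y m)).
rewrite S_INR /P /= -/P.
case: m IH HPm Hd => [|m] IH HPm Hd; first by rewrite /= in IH *; lra.
have He : 0 < INR m.+1 by apply: lt_0_INR; lia.
have Ht := bsq_tri (INR m.+1) (y m.+2) (y m.+1) (y 0%N) He.
have : (1 + / INR m.+1) * bsqnorm (bsub (y m.+1) (y 0%N)) <= (INR m.+1 + 1) * P m.+1.
  have -> : (INR m.+1 + 1) * P m.+1 = (1 + / INR m.+1) * (INR m.+1 * P m.+1) by field; lra.
  by apply: Rmult_le_compat_l => //; have := Rinv_0_lt_compat _ He; lra.
lra.
Qed.

(** * Proximal inequalities for a convex function *)

Section Prox.
Context {N : nat} {n : 'I_N -> nat} {G : bvec n -> ereal} {gam : 'I_N -> R}.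
Hypothesis gam_pos : forall i, 0 < gam i.

Lemma prox_val {u z} : in_prox G gam u z -> exists a, G z = EFin a.
Proof. by move=> [a [Ha _]]; exists a. Qed.

Lemma prox_ineq {u z a w b} : in_prox G gam u z -> G z = EFin a -> G w = EFin b ->
  a + / 2 * bwsqnorm gam (bsub z u) <= / 2 * bwsqnorm gam (bsub w u) + b.
Proof.
move=> [a' [Ha' H]] Hz Hw; rewrite Hz in Ha'; case: Ha' => ->.
by have := H w; rewrite Hw.
Qed.

Hypothesis G_convex : convex_fun G.

(* First-order optimality of the prox, tested along the segment from z1 to z2. *)
Lemma prox_variational {u1 z1 z2 a1 a2} :
  in_prox G gam u1 z1 -> G z1 = EFin a1 -> G z2 = EFin a2 ->
  a1 - a2 <= wdot gam (bsub z1 u1) (bsub z2 z1).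
Proof.
move=> Hp H1 H2.
apply: (le_of_small_perturbation _ _ (/ 2 * bwsqnorm gam (bsub z2 z1))) => t Ht.
have := G_convex z2 z1 a2 a1 t H2 H1 ltac:(lra).
case E : (G (bcomb t z2 z1)) => [b|] //= Hb.
have := prox_ineq Hp H1 E; rewrite bw_expand => Hi.
apply: (Rmult_le_reg_l t); first lra.
nra.
Qed.

Lemma prox_nonexpansive {u1 z1 u2 z2} : in_prox G gam u1 z1 -> in_prox G gam u2 z2 ->
  bwsqnorm gam (bsub z1 z2) <= bwsqnorm gam (bsub u1 u2).
Proof.
move=> Hp1 Hp2.
have [a1 Ha1] := prox_val Hp1; have [a2 Ha2] := prox_val Hp2.
have := prox_variational Hp1 Ha1 Ha2; have := prox_variational Hp2 Ha2 Ha1.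
have := wdot_cross gam z1 z2 u1 u2.
have := wdot_young_abs gam gam_pos 1 (bsub u1 u2) (bsub z1 z2) Rlt_0_1; rewrite Rinv_1.
have := Rle_abs (wdot gam (bsub u1 u2) (bsub z1 z2)); lra.
Qed.

End Prox.

(** * The block-separable model of the problem *)

Section Problem.
Variables (N : nat) (n : 'I_N -> nat)
  (f : forall i : 'I_N, vec (n i) -> R)
  (gf : forall i : 'I_N, vec (n i) -> vec (n i))
  (L : 'I_N -> R) (G : bvec n -> ereal) (gam : 'I_N -> R).
Hypothesis HN : (1 <= N)%N.
Hypothesis Hgrad : forall i, has_gradient (f i) (gf i).
Hypothesis HL : forall i, 0 <= L i /\ lipschitz (gf i) (L i).
Hypothesis Hgam : forall i, 0 < gam i /\ gam i * L i < INR N.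

Lemma INR_N_ge1 : 1 <= INR N.
Proof. by rewrite -/(INR 1); apply: le_INR; apply/leP. Qed.

Lemma gam_pos i : 0 < gam i. Proof. by case: (Hgam i). Qed.
Lemma L_nonneg i : 0 <= L i. Proof. by case: (HL i). Qed.

(* Block i of the model  F(x) + <grad F(x), w - x> + 1/2 ||w - x||^2_{Gamma^-1}
   whose infimum plus G defines the forward-backward envelope. *)
Definition model_blk i (xi wi : vec (n i)) : R :=
  / INR N * f i xi + dotv (fun j => / INR N * gf i xi j) (subv wi xi)
  + / 2 * (/ gam i * dotv (subv wi xi) (subv wi xi)).

Definition model (x w : bvec n) : R := fsum (fun i => model_blk i (x i) (w i)).

Lemma model_eq (x w : bvec n) :
  Fsum f x + bdot (gradF gf x) (bsub w x) + / 2 * bwsqnorm gam (bsub w x) = model x w.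
Proof. by rewrite /Fsum /bdot /bwsqnorm; fsum_collect; apply: fsum_ext. Qed.

Lemma model_blk_self i (v : vec (n i)) : model_blk i v v = / INR N * f i v.
Proof. by rewrite /model_blk subv_self !dotv_zero_r; ring. Qed.

Lemma model_self (v : bvec n) : model v v = Fsum f v.
Proof. by rewrite /Fsum -fsum_scal; apply: fsum_ext => i; exact: model_blk_self. Qed.

(* The prox objective at x - Gamma grad F(x) differs from the model by a
   constant, so z in T(x) minimizes  model x w + G w  over w. *)
Lemma prox_objective_shift (x w : bvec n) :
  / 2 * bwsqnorm gam (bsub w (fb_point gf gam x)) =
  / 2 * bwsqnorm gam (bsub w x) + bdot (gradF gf x) (bsub w x) +
  / 2 * fsum (fun i => gam i * dotv (@gradF N n gf x i) (@gradF N n gf x i)).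
Proof.
rewrite /bwsqnorm /bdot; fsum_collect; apply: fsum_ext => i.
rewrite /dotv; fsum_collect; apply: fsum_ext => j; rewrite /bsub /fb_point.
by field; apply: Rgt_not_eq; exact: gam_pos.
Qed.

Lemma T_minimizes_model {x z w : bvec n} {a g} :
  in_T gf G gam x z -> G z = EFin a -> G w = EFin g -> model x z + a <= model x w + g.
Proof.
move=> HT Hz Hw; have := prox_ineq HT Hz Hw.
rewrite !prox_objective_shift -!model_eq; lra.
Qed.

Lemma FBE_at_T (x z : bvec n) a : in_T gf G gam x z -> G z = EFin a ->
  is_FBE f gf G gam x (model x z + a).
Proof.
move=> HT Hz; split.
- move=> r [w [g [Hw ->]]]; have := T_minimizes_model HT Hz Hw; rewrite -!model_eq; lra.
- by move=> m' Hm'; apply: Hm'; exists z, a; split => //; rewrite -model_eq; ring.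
Qed.

(* Blockwise curvature constants: the model is squeezed between
   F(w) + c_i ||w_i - x_i||^2 and F(w) + C_i ||w_i - x_i||^2 (descent lemma);
   c_i > 0 is where the step-size condition gamma_i L_i < N enters. *)
Definition c_low i := / 2 * (/ gam i - L i / INR N).
Definition C_up i := / 2 * (L i / INR N + / gam i).

Lemma c_low_pos i : 0 < c_low i.
Proof.
rewrite /c_low; have [Hg Hgl] := Hgam i; have HN1 := INR_N_ge1.
suff : L i / INR N < / gam i by lra.
apply: (Rmult_lt_reg_r (gam i * INR N)); first nra.
have -> : L i / INR N * (gam i * INR N) = gam i * L i by field; lra.
by have -> : / gam i * (gam i * INR N) = INR N by field; lra.
Qed.

Lemma C_up_nonneg i : 0 <= C_up i.
Proof.
rewrite /C_up; have := Rinv_0_lt_compat _ (gam_pos i); have := L_nonneg i.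
have := Rinv_0_lt_compat _ (Rlt_le_trans _ _ _ Rlt_0_1 INR_N_ge1).
rewrite /Rdiv; nra.
Qed.

Lemma model_blk_ge i (xi wi : vec (n i)) :
  / INR N * f i wi + c_low i * dotv (subv wi xi) (subv wi xi) <= model_blk i xi wi.
Proof.
have Hd := descent_upper _ _ _ (Hgrad i) (L_nonneg i) (proj2 (HL i)) xi wi.
have HN0 : 0 < INR N by have := INR_N_ge1; lra.
have Hg := gam_pos i.
set Q := dotv (subv wi xi) (subv wi xi) in Hd *.
set D := dotv (gf i xi) (subv wi xi) in Hd.
have -> : model_blk i xi wi = / INR N * f i wi + c_low i * Q +
   / INR N * (f i xi + D + L i / 2 * Q - f i wi).
  by rewrite /model_blk dotv_scal_l -/Q -/D /c_low; field; lra.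
suff : 0 <= / INR N * (f i xi + D + L i / 2 * Q - f i wi) by lra.
by apply: Rmult_le_pos; [exact: Rlt_le (Rinv_0_lt_compat _ HN0) | lra].
Qed.

Lemma model_blk_le i (xi wi : vec (n i)) :
  model_blk i xi wi <= / INR N * f i wi + C_up i * dotv (subv wi xi) (subv wi xi).
Proof.
have Hd := descent_lower _ _ _ (Hgrad i) (L_nonneg i) (proj2 (HL i)) xi wi.
have HN0 : 0 < INR N by have := INR_N_ge1; lra.
have Hg := gam_pos i.
set Q := dotv (subv wi xi) (subv wi xi) in Hd *.
set D := dotv (gf i xi) (subv wi xi) in Hd.
have -> : model_blk i xi wi = / INR N * f i wi + C_up i * Q -
   / INR N * (f i wi - (f i xi + D - L i / 2 * Q)).
  by rewrite /model_blk dotv_scal_l -/Q -/D /C_up; field; lra.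
suff : 0 <= / INR N * (f i wi - (f i xi + D - L i / 2 * Q)) by lra.
by apply: Rmult_le_pos; [exact: Rlt_le (Rinv_0_lt_compat _ HN0) | lra].
Qed.

Definition Cmax := fsum C_up.

Lemma Cmax_nonneg : 0 <= Cmax.
Proof. apply: fsum_nonneg => i; exact: C_up_nonneg. Qed.

Lemma F_le_model (x w : bvec n) : Fsum f w <= model x w.
Proof.
rewrite /Fsum -fsum_scal; apply: fsum_le => i; apply: Rle_trans (model_blk_ge _ _ _).
have := c_low_pos i; have := dotv_nonneg (subv (w i) (x i)); nra.
Qed.

Lemma model_le_F (x w : bvec n) : model x w <= Fsum f w + Cmax * bsqnorm (bsub w x).
Proof.
rewrite /Fsum /bsqnorm /bdot; fsum_collect; apply: fsum_le => i.
apply: Rle_trans (model_blk_le _ _ _) _; apply: Rplus_le_compat_l.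
apply: Rmult_le_compat_r; first exact: dotv_nonneg.
by apply: (fsum_ge_term C_up) => j; exact: C_up_nonneg.
Qed.

Lemma fixed_point_stationary c ac : in_T gf G gam c c -> G c = EFin ac ->
  in_frechet_subdiff (PhiF f G) c (@bzero N n).
Proof.
move=> Hp Hac; exists (Fsum f c + ac); split; first by rewrite /PhiF Hac.
move=> eps He; have HC := Cmax_nonneg.
exists (eps / (Cmax + 1)); split; first by apply: Rdiv_lt_0_compat; lra.
move=> y Hy; case Ey : (G y) => [g|]; rewrite /PhiF Ey //=.
have := T_minimizes_model Hp Hac Ey; rewrite model_self.
have := model_le_F c y; rewrite -bnorm_sq bdot_zero_l.
have Hb := bnorm_nonneg (bsub y c).
have : Cmax * bnorm (bsub y c) <= eps.
  apply: Rle_trans (Rlt_le _ _ (scaled_lt Cmax eps HC He)).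
  by apply: Rmult_le_compat_l => //; lra.
nra.
Qed.

Lemma Fsum_change_bound (c y : bvec n) e : 0 < e ->
  Rabs (Fsum f y - Fsum f c) <=
  e * fsum (fun i => dotv (gf i (c i)) (gf i (c i))) +
  (1 + / e) * (1 + fsum L) * bsqnorm (bsub y c).
Proof.
move=> He.
have HNinv : 0 < / INR N <= 1.
  have := INR_N_ge1 => H1; split; first by apply: Rinv_0_lt_compat; lra.
  by rewrite -Rinv_1; apply: Rinv_le_contravar; lra.
have Hie := Rinv_0_lt_compat _ He.
rewrite /Fsum -Rmult_minus_distr_l fsum_minus Rabs_mult (Rabs_pos_eq (/ INR N)); last lra.
have Habs := fsum_abs (fun i => f i (y i) - f i (c i)).
have Hsum : fsum (fun i => Rabs (f i (y i) - f i (c i))) <=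
  e * fsum (fun i => dotv (gf i (c i)) (gf i (c i))) +
  (1 + / e) * (1 + fsum L) * bsqnorm (bsub y c).
  rewrite /bsqnorm /bdot; fsum_collect; apply: fsum_le => i.
  have := smooth_change_bound (f i) (gf i) (L i) e (c i) (y i)
    (Hgrad i) (L_nonneg i) (proj2 (HL i)) He.
  have HLi : L i <= fsum L by apply: fsum_ge_term => j; exact: L_nonneg.
  have HK : / e + L i <= (1 + / e) * (1 + fsum L) by have := L_nonneg i; nra.
  have := Rmult_le_compat_r _ _ _ (dotv_nonneg (subv (y i) (c i))) HK.
  change (@bsub N n y c i) with (subv (y i) (c i)); lra.
have := Rabs_pos (fsum (fun i => f i (y i) - f i (c i))).
have H0 : 0 <= fsum (fun i => Rabs (f i (y i) - f i (c i))).
  by apply: fsum_nonneg => i; exact: Rabs_pos.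
nra.
Qed.

Lemma Fsum_continuous (c : bvec n) eps : 0 < eps -> exists d, 0 < d /\
  forall y, bsqnorm (bsub y c) < d -> Rabs (Fsum f y - Fsum f c) < eps.
Proof.
have HA : 0 <= fsum (fun i => dotv (gf i (c i)) (gf i (c i))).
  by apply: fsum_nonneg => i; exact: dotv_nonneg.
have HB : 0 <= 1 + fsum L.
  have : 0 <= fsum L by apply: fsum_nonneg => i; exact: L_nonneg.
  lra.
exact: (small_of_modulus (fun y => Rabs (Fsum f y - Fsum f c)) (fun y => bsqnorm (bsub y c))
  _ _ HA HB (fun y => bsq_nonneg _) (fun e y He => Fsum_change_bound c y e He) eps).
Qed.

Definition fb_lip_blk i := 2 + 2 * ((gam i / INR N) * (gam i / INR N)) * (L i * L i).
Definition Kfb := fsum fb_lip_blk.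

Lemma fb_lip_blk_nonneg i : 0 <= fb_lip_blk i.
Proof.
rewrite /fb_lip_blk; have := Rle_0_sqr (gam i / INR N); have := Rle_0_sqr (L i).
rewrite /Rsqr; nra.
Qed.

Lemma Kfb_nonneg : 0 <= Kfb.
Proof. apply: fsum_nonneg => i; exact: fb_lip_blk_nonneg. Qed.

Lemma fb_point_lipschitz (y1 y2 : bvec n) :
  bsqnorm (bsub (fb_point gf gam y1) (fb_point gf gam y2)) <= Kfb * bsqnorm (bsub y1 y2).
Proof.
rewrite /bsqnorm /bdot -fsum_scal; apply: fsum_le => i.
set s := gam i / INR N; set d := subv (y1 i) (y2 i); set dg := subv (gf i (y1 i)) (gf i (y2 i)).
have -> : @bsub N n (fb_point gf gam y1) (fb_point gf gam y2) i = (fun j => d j - s * dg j).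
  apply: functional_extensionality => j.
  by rewrite /bsub /fb_point /gradF /d /dg /s /subv /Rdiv; ring.
have Hsplit : dotv (fun j => d j - s * dg j) (fun j => d j - s * dg j) <=
    2 * dotv d d + 2 * (s * s) * dotv dg dg.
  rewrite /dotv; fsum_collect; apply: fsum_le => j.
  by have := Rle_0_sqr (d j + s * dg j); rewrite /Rsqr; nra.
have Hlip := lipschitz_sq (gf i) (L i) (y1 i) (y2 i) (L_nonneg i) (proj2 (HL i)).
have Hblk : fb_lip_blk i <= Kfb by apply: fsum_ge_term => j; exact: fb_lip_blk_nonneg.
have Hd := dotv_nonneg d; have Hs := Rle_0_sqr s; rewrite /Rsqr in Hs.
change (@bsub N n y1 y2 i) with d.
apply: Rle_trans Hsplit _; apply: Rle_trans (Rmult_le_compat_r _ _ _ Hd Hblk).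
rewrite /fb_lip_blk -/s -/d -/dg in Hlip *; nra.
Qed.

Lemma prox_objective_continuous (c w : bvec n) eps : 0 < eps -> exists d, 0 < d /\
  forall y v, bsqnorm (bsub y c) < d -> bsqnorm (bsub v w) < d ->
  Rabs (bwsqnorm gam (bsub v (fb_point gf gam y)) -
        bwsqnorm gam (bsub w (fb_point gf gam c))) < eps.
Proof.
move=> He.
set A := bwsqnorm gam (bsub w (fb_point gf gam c)).
set Wsum := fsum (fun i => / gam i).
have HW : 0 <= Wsum by apply: fsum_nonneg => i; exact: Rlt_le (Rinv_0_lt_compat _ (gam_pos i)).
have HKfb := Kfb_nonneg.
have Hmod : forall e (p : bvec n * bvec n), 0 < e ->
    Rabs (bwsqnorm gam (bsub p.2 (fb_point gf gam p.1)) - A) <=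
    e * A + (1 + / e) * (Wsum * (2 + 2 * Kfb)) *
      (bsqnorm (bsub p.1 c) + bsqnorm (bsub p.2 w)).
  move=> e [y v] Hpos /=.
  apply: Rle_trans (bw_change_bound gam gam_pos e _ _ Hpos) _; apply: Rplus_le_compat_l.
  rewrite Rmult_assoc; apply: Rmult_le_compat_l; first by have := Rinv_0_lt_compat _ Hpos; lra.
  apply: Rle_trans (bw_le_bsq gam gam_pos _) _; rewrite -/Wsum Rmult_assoc.
  apply: Rmult_le_compat_l => //.
  have := bsq_tri2 (bsub v (fb_point gf gam y)) (bsub w (fb_point gf gam y))
    (bsub w (fb_point gf gam c)).
  rewrite bsub_cancel_r bsub_cancel_l bsq_sym (bsq_sym y c).
  have := fb_point_lipschitz c y; have := bsq_nonneg (bsub y c); have := bsq_nonneg (bsub v w).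
  rewrite (bsq_sym y c); nra.
have HA : 0 <= A by exact: bw_nonneg gam gam_pos _.
have HB : 0 <= Wsum * (2 + 2 * Kfb) by nra.
have [d [Hd Hsmall]] :=
  small_of_modulus _ (fun p => bsqnorm (bsub p.1 c) + bsqnorm (bsub p.2 w)) _ _
  HA HB (fun p => Rplus_le_le_0_compat _ _ (bsq_nonneg _) (bsq_nonneg _)) Hmod eps He.
exists (d / 2); split; first lra.
by move=> y v Hy Hv; apply: (Hsmall (y, v)) => /=; lra.
Qed.

(** * The iterates of Algorithm BC *)

Section Iterates.
Hypothesis HGconvex : convex_fun G.
Variable Phimin : R.
Hypothesis Phimin_lb : forall y, ele (EFin Phimin) (PhiF f G y).
Variables (x z : nat -> bvec n) (I : nat -> 'I_N -> bool).
Hypothesis HT : forall k, in_T gf G gam (x k) (z k).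
Hypothesis Hupd : forall k i, x (S k) i = if I (S k) i then z k i else x k i.
Variable T : nat.
Hypothesis Hcyc : forall k i, exists t, (1 <= t <= T)%N /\ I (k + t)%N i = true.
Hypothesis HGlsc : lsc G.
Hypothesis HGproper : proper_fun G.

Definition Gz k : R := if G (z k) is EFin r then r else 0.

Lemma Gz_eq k : G (z k) = EFin (Gz k).
Proof. by have [a Ha] := prox_val (HT k); rewrite /Gz Ha. Qed.

Definition env k := model (x k) (z k) + Gz k.
Definition Phiz k := Fsum f (z k) + Gz k.
Definition res k := bsqnorm (bsub (x k) (z k)).
Definition step k := bsqnorm (bsub (x (S k)) (x k)).

Lemma env_FBE k : is_FBE f gf G gam (x k) (env k).
Proof. exact: FBE_at_T (HT k) (Gz_eq k). Qed.

Lemma PhiF_z k : PhiF f G (z k) = EFin (Phiz k).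
Proof. by rewrite /PhiF Gz_eq. Qed.

Lemma res_nonneg k : 0 <= res k. Proof. exact: bsq_nonneg. Qed.
Lemma step_nonneg k : 0 <= step k. Proof. exact: bsq_nonneg. Qed.

Lemma Phiz_le_env k : Phiz k <= env k.
Proof. by rewrite /Phiz /env; have := F_le_model (x k) (z k); lra. Qed.

Lemma env_le_Phiz k : env k <= Phiz k + Cmax * res k.
Proof. by rewrite /Phiz /env /res bsq_sym; have := model_le_F (x k) (z k); lra. Qed.

Lemma Phimin_le_env k : Phimin <= env k.
Proof. by have := Phimin_lb (z k); rewrite PhiF_z /=; have := Phiz_le_env k; lra. Qed.

Definition cmin := / fsum (fun i => / c_low i).

Lemma cmin_pos : 0 < cmin.
Proof.
have Hinv i := Rinv_0_lt_compat _ (c_low_pos i).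
apply: Rinv_0_lt_compat; apply: Rlt_le_trans (Hinv (Ordinal HN)) _.
by apply: (fsum_ge_term (fun i => / c_low i)) => j; exact: Rlt_le (Hinv j).
Qed.

Lemma cmin_le i : cmin <= c_low i.
Proof.
have Hinv j := Rinv_0_lt_compat _ (c_low_pos j).
rewrite -(Rinv_inv (c_low i)) /cmin; apply: Rinv_le_contravar => //.
by apply: (fsum_ge_term (fun i => / c_low i)) => j; exact: Rlt_le (Hinv j).
Qed.

Lemma env_decrease k : env (S k) + cmin * step k <= env k.
Proof.
have Hmin := T_minimizes_model (HT (S k)) (Gz_eq (S k)) (Gz_eq k).
suff : model (x (S k)) (z k) + cmin * step k <= model (x k) (z k) by rewrite /env; lra.
rewrite /model /step /bsqnorm /bdot -fsum_scal -fsum_plus; apply: fsum_le => i.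
change (@bsub N n (x (S k)) (x k) i) with (subv (x (S k) i) (x k i)).
rewrite Hupd; case: (I (S k) i).
- rewrite model_blk_self; have := model_blk_ge i (x k i) (z k i); have := cmin_le i.
  have := dotv_nonneg (subv (z k i) (x k i)); nra.
- by rewrite subv_self dotv_zero_r; lra.
Qed.

Lemma env_le_env0 k : env k <= env 0.
Proof.
elim: k => [|k IH]; first lra.
by have := env_decrease k; have := cmin_pos; have := step_nonneg k; nra.
Qed.

(* Telescoping the sufficient decrease: the steps over any window sum to at
   most the budget (env 0 - min Phi) / cmin. *)
Definition step_budget := / cmin * (env 0 - Phimin).

Lemma step_window_sum s K : psum (fun k => step (k + s)%N) K <= step_budget.
Proof.
have Hic := Rinv_0_lt_compat _ cmin_pos.
have Hstep k : step k <= / cmin * (env k - env (S k)).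
  apply: (Rmult_le_reg_l cmin); first exact: cmin_pos.
  by rewrite -Rmult_assoc Rinv_r; have := env_decrease k; have := cmin_pos; lra.
apply: Rle_trans (psum_le _ _ K (fun k => Hstep (k + s)%N)) _.
rewrite psum_scal psum_telescope /step_budget; apply: Rmult_le_compat_l; first lra.
by have := env_le_env0 s; have := Phimin_le_env (K + s)%N; lra.
Qed.

(* T is Lipschitz, as the composition of the Lipschitz forward step with the
   nonexpansive proximal map. *)
Definition Kz := fsum gam * (fsum (fun i => / gam i) * Kfb).

Lemma Kz_nonneg : 0 <= Kz.
Proof.
have := Kfb_nonneg.
have : 0 <= fsum gam by apply: fsum_nonneg => i; exact: Rlt_le (gam_pos i).
have : 0 <= fsum (fun i => / gam i).
  by apply: fsum_nonneg => i; exact: Rlt_le (Rinv_0_lt_compat _ (gam_pos i)).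
by rewrite /Kz => *; apply: Rmult_le_pos => //; apply: Rmult_le_pos.
Qed.

Lemma z_lipschitz j k : bsqnorm (bsub (z j) (z k)) <= Kz * bsqnorm (bsub (x j) (x k)).
Proof.
have Hnonexp := prox_nonexpansive gam_pos HGconvex (HT j) (HT k).
have HG : 0 <= fsum gam by apply: fsum_nonneg => i; exact: Rlt_le (gam_pos i).
have HW : 0 <= fsum (fun i => / gam i).
  by apply: fsum_nonneg => i; exact: Rlt_le (Rinv_0_lt_compat _ (gam_pos i)).
apply: Rle_trans (bsq_le_bw gam gam_pos _) _; rewrite /Kz !Rmult_assoc.
apply: Rmult_le_compat_l => //; apply: Rle_trans Hnonexp _.
apply: Rle_trans (bw_le_bsq gam gam_pos _) _; apply: Rmult_le_compat_l => //.
exact: fb_point_lipschitz.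
Qed.

Definition window k := psum (fun s => step (k + s)%N) T.

Lemma x_window_bound k m : (m <= T)%N -> bsqnorm (bsub (x (k + m)%N) (x k)) <= INR T * window k.
Proof.
move=> HmT.
have := bsq_path_bound (fun s => x (k + s)%N) m; rewrite /= addn0.
rewrite (psum_ext _ (fun s => step (k + s)%N)); last by move=> s; rewrite /step addnS.
move=> H; apply: Rle_trans H _.
have H1 : INR m <= INR T by apply: le_INR; apply/leP.
have H2 : psum (fun s => step (k + s)%N) m <= window k.
  by apply: psum_mono => // s; exact: step_nonneg.
have := psum_nonneg (fun s => step (k + s)%N) m (fun s => step_nonneg _).
have := pos_INR m; nra.
Qed.

Lemma res_window_bound k : res k <= INR N * ((2 + 2 * Kz) * (INR T * window k)).
Proof.
apply: fsum_bound => i.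
have [[|t] [/andP [Ht1 HtT] HI]] := Hcyc k i; first by [].
have Hx : x (k + t.+1)%N i = z (k + t)%N i by rewrite addnS Hupd -addnS HI.
change (@bsub N n (x k) (z k) i) with (subv (x k i) (z k i)).
have := dotv_tri 1 (x k i) (x (k + t.+1)%N i) (z k i) Rlt_0_1; rewrite Rinv_1 Hx.
have Hxw : dotv (subv (x k i) (z (k + t)%N i)) (subv (x k i) (z (k + t)%N i)) <= INR T * window k.
  have := block_le_bsq (bsub (x k) (x (k + t.+1)%N)) i.
  change (@bsub N n (x k) (x (k + t.+1)%N) i) with (subv (x k i) (x (k + t.+1)%N i)).
  rewrite Hx bsq_sym => Hb; apply: Rle_trans Hb _; exact: x_window_bound.
have Hzw : dotv (subv (z (k + t)%N i) (z k i)) (subv (z (k + t)%N i) (z k i)) <=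
    Kz * (INR T * window k).
  have := block_le_bsq (bsub (z (k + t)%N) (z k)) i.
  change (@bsub N n (z (k + t)%N) (z k) i) with (subv (z (k + t)%N i) (z k i)).
  move=> Hb; apply: Rle_trans Hb _; apply: Rle_trans (z_lipschitz _ _) _.
  by apply: Rmult_le_compat_l; [exact: Kz_nonneg | apply: x_window_bound; exact: ltnW].
lra.
Qed.

Lemma res_summable : exists l, Un_cv (fun K => sum_f_R0 res K) l.
Proof.
set Cres := INR N * ((2 + 2 * Kz) * INR T).
have HC : 0 <= Cres.
  apply: Rmult_le_pos; first exact: pos_INR.
  by apply: Rmult_le_pos; [have := Kz_nonneg; lra | exact: pos_INR].
have Hbudget : 0 <= step_budget.
  rewrite /step_budget; apply: Rmult_le_pos; first exact: Rlt_le (Rinv_0_lt_compat _ cmin_pos).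
  by have := Phimin_le_env 0; lra.
have Hpsum K : psum res K <= Cres * (INR T * step_budget).
  apply: Rle_trans (psum_le _ (fun k => Cres * window k) K _) _.
    by move=> k; have := res_window_bound k; rewrite /Cres; lra.
  rewrite psum_scal; apply: Rmult_le_compat_l => //.
  rewrite /window (psum_swap (fun k s => step (k + s)%N)) -psum_const.
  by apply: psum_le => s; exact: step_window_sum.
apply: Un_cv_crit.
- by move=> m /=; have := res_nonneg m.+1; lra.
- by exists (Cres * (INR T * step_budget)) => y [K ->]; rewrite sum_f_psum.
Qed.

Lemma res_to0 : Un_cv res 0.
Proof. by have [l Hl] := res_summable; exact: series_terms_to0 Hl. Qed.

Lemma env_cv : {l | Un_cv env l}.
Proof.
apply: decreasing_cv.
- move=> k; have := env_decrease k; have := cmin_pos; have := step_nonneg k; rewrite /Rge; nra.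
- by exists (- Phimin) => y [k ->]; rewrite /opp_seq; have := Phimin_le_env k; lra.
Qed.

Lemma Phiz_cv l : Un_cv env l -> Un_cv Phiz l.
Proof.
move=> Hl.
have Hlow : Un_cv (fun k => env k - Cmax * res k) l.
  have := CV_minus _ _ _ _ Hl (CV_mult _ _ _ _ (Un_cv_const Cmax) res_to0).
  by rewrite Rmult_0_r Rminus_0_r.
apply: (Un_cv_squeeze _ _ _ _ _ Hlow Hl) => k.
by have := Phiz_le_env k; have := env_le_Phiz k; lra.
Qed.

(* The prox inequality defining z^k, transported to a point c approached by
   both x^k and z^k, using the continuity of the prox objective. *)
Lemma prox_ineq_near c w b eps : G w = EFin b -> 0 < eps -> exists d, 0 < d /\
  forall k, bsqnorm (bsub (x k) c) < d -> bsqnorm (bsub (z k) c) < d ->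
  Gz k + / 2 * bwsqnorm gam (bsub c (fb_point gf gam c)) <=
  / 2 * bwsqnorm gam (bsub w (fb_point gf gam c)) + b + eps.
Proof.
move=> Hw He.
have [d1 [Hd1 Hq1]] := prox_objective_continuous c c eps He.
have [d2 [Hd2 Hq2]] := prox_objective_continuous c w eps He.
exists (Rmin d1 d2); split; first exact: Rmin_glb_lt.
move=> k Hx Hz.
have Hm1 := Rmin_l d1 d2; have Hm2 := Rmin_r d1 d2.
have := prox_ineq (HT k) (Gz_eq k) Hw.
have := Hq1 (x k) (z k) ltac:(lra) ltac:(lra).
have := Hq2 (x k) w ltac:(lra) ltac:(rewrite bsq_self; lra).
move=> /Rabs_def2 [? ?] /Rabs_def2 [? ?]; lra.
Qed.

Section ClusterPoint.
Variable c : bvec n.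
Hypothesis Hcl : cluster_point x c.

Lemma near_cluster d M : 0 < d -> exists k, (M <= k)%N /\
  bsqnorm (bsub (x k) c) < d /\ bsqnorm (bsub (z k) c) < d.
Proof. by move=> Hd; exact: near_both res_to0 Hcl d Hd M. Qed.

(* Limit form of the prox inequality: lower semicontinuity of G bounds
   G(c) from above by the limit of the prox inequalities. *)
Lemma cluster_prox_ineq r w b : rlt_e r (G c) -> G w = EFin b ->
  r + / 2 * bwsqnorm gam (bsub c (fb_point gf gam c)) <=
  / 2 * bwsqnorm gam (bsub w (fb_point gf gam c)) + b.
Proof.
move=> Hr Hw; apply: Rle_plus_epsilon => eps He.
have [d1 [Hd1 Hlsc]] := HGlsc c r Hr.
have [d2 [Hd2 Hnear]] := prox_ineq_near c w b eps Hw He.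
have [k [_ [Hx Hz]]] := near_cluster _ 0 (Rmin_glb_lt _ _ _ (Rmult_lt_0_compat _ _ Hd1 Hd1) Hd2).
have Hm1 := Rmin_l (d1 * d1) d2; have Hm2 := Rmin_r (d1 * d1) d2.
have Hzk : bnorm (bsub (z k) c) < d1 by apply/(bnorm_lt_iff _ _ Hd1); lra.
have := Hlsc _ Hzk; rewrite Gz_eq /=.
have := Hnear k ltac:(lra) ltac:(lra); lra.
Qed.

Lemma cluster_in_dom : exists ac, G c = EFin ac.
Proof.
case E : (G c) => [ac|]; first by exists ac.
have [w [b Hw]] := HGproper.
set r := / 2 * bwsqnorm gam (bsub w (fb_point gf gam c)) + b
         - / 2 * bwsqnorm gam (bsub c (fb_point gf gam c)) + 1.
by have := cluster_prox_ineq r w b (ltac:(by rewrite E)) Hw; rewrite /r; lra.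
Qed.

Lemma cluster_fixed ac : G c = EFin ac -> in_T gf G gam c c.
Proof.
move=> Hac; exists ac; split => // w.
case Ew : (G w) => [b|] //=.
apply: Rle_plus_epsilon => eps He.
have := cluster_prox_ineq (ac - eps) w b (ltac:(by rewrite Hac /=; lra)) Ew; lra.
Qed.

Lemma cluster_value l ac : Un_cv env l -> G c = EFin ac -> Fsum f c + ac = l.
Proof.
move=> Hl Hac; apply: eq_of_close => eps He.
have He4 : 0 < eps / 4 by lra.
have [N1 HN1] := Phiz_cv l Hl (eps / 4) He4.
have [dF [HdF HF]] := Fsum_continuous c (eps / 4) He4.
have [dL [HdL Hlsc]] := HGlsc c (ac - eps / 4) (ltac:(by rewrite Hac /=; lra)).
have [dQ [HdQ Hnear]] := prox_ineq_near c c ac (eps / 4) Hac He4.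
have [d [Hd [HdF' [HdL' HdQ']]]] : exists d, 0 < d /\ d <= dF /\ d <= dL * dL /\ d <= dQ.
  exists (Rmin (Rmin dF (dL * dL)) dQ).
  have := Rmin_l (Rmin dF (dL * dL)) dQ; have := Rmin_r (Rmin dF (dL * dL)) dQ.
  have := Rmin_l dF (dL * dL); have := Rmin_r dF (dL * dL).
  split; last lra.
  by apply: Rmin_glb_lt => //; apply: Rmin_glb_lt => //; nra.
have [k [Hk [Hx Hz]]] := near_cluster d N1 Hd.
have := HN1 k ltac:(by apply/leP); rewrite /R_dist /Phiz => /Rabs_def2 [? ?].
have := HF (z k) ltac:(lra) => /Rabs_def2 [? ?].
have Hzk : bnorm (bsub (z k) c) < dL by apply/(bnorm_lt_iff _ _ HdL); lra.
have := Hlsc _ Hzk; rewrite Gz_eq /= => ?.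
have := Hnear k ltac:(lra) ltac:(lra) => ?.
apply: Rabs_def1; lra.
Qed.
End ClusterPoint.

Lemma bc_convergence :
  (exists l, infinite_sum (fun k => bsqnorm (bsub (x k) (z k))) l) /\
  (exists (phi : nat -> R) (phiz : nat -> R) (Phistar : R),
     (forall k, is_FBE f gf G gam (x k) (phi k)) /\
     Un_cv phi Phistar /\
     (forall w a, is_minimizer (PhiF f G) w -> PhiF f G w = EFin a -> a <= Phistar) /\
     (forall k, PhiF f G (z k) = EFin (phiz k)) /\
     Un_cv phiz Phistar /\
     (forall c, cluster_point x c <-> cluster_point z c) /\
     (forall c, cluster_point x c ->
        in_frechet_subdiff (PhiF f G) c (@bzero N n) /\
        PhiF f G c = EFin Phistar /\
        is_FBE f gf G gam c Phistar)).
Proof.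
have [Phistar Henv] := env_cv.
have HPhiz := Phiz_cv Phistar Henv.
have Hres_sym : Un_cv (fun k => bsqnorm (bsub (z k) (x k))) 0.
  have -> : (fun k => bsqnorm (bsub (z k) (x k))) = res.
    by apply: functional_extensionality => k; rewrite /res bsq_sym.
  exact: res_to0.
split; first exact: res_summable.
exists env, Phiz, Phistar.
split; first exact: env_FBE.
split; first exact: Henv.
split.
  (* Phi_star >= min Phi, since Phi(z^k) >= min Phi for all k. *)
  move=> w a [a' [Hw' Hall]] Hwa; rewrite Hwa in Hw'; case: Hw' => ->.
  apply: (Rle_cv_lim _ (Un_cv_const a') HPhiz) => k.
  by have := Hall (z k); rewrite PhiF_z.
split; first exact: PhiF_z.
split; first exact: HPhiz.
split.
  move=> c; split => Hc; first exact: cluster_transfer x z c res_to0 Hc.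
  exact: cluster_transfer z x c Hres_sym Hc.
move=> c Hcl.
have [ac Hac] := cluster_in_dom c Hcl.
have Hfix := cluster_fixed c Hcl ac Hac.
have Hval := cluster_value c Hcl Phistar ac Henv Hac.
split; first exact: fixed_point_stationary c ac Hfix Hac.
split; first by rewrite /PhiF Hac /= Hval.
by have := FBE_at_T c c ac Hfix Hac; rewrite model_self Hval.
Qed.
End Iterates.
End Problem.

Theorem theorem2p8
  (N : nat) (n : 'I_N -> nat)
  (f : forall i : 'I_N, vec (n i) -> R)
  (gf : forall i : 'I_N, vec (n i) -> vec (n i))
  (L : 'I_N -> R)
  (G : bvec n -> ereal)
  (gam : 'I_N -> R)
  (HN : (1 <= N)%nat)
  (Hgrad : forall i, has_gradient (f i) (gf i))
  (HL : forall i, 0 <= L i /\ lipschitz (gf i) (L i))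
  (HGproper : proper_fun G) (HGlsc : lsc G) (HGconvex : convex_fun G)
  (Hargmin : exists w, is_minimizer (PhiF f G) w)
  (Hgam : forall i, 0 < gam i /\ gam i * L i < INR N)
  (x z : nat -> bvec n) (I : nat -> 'I_N -> bool)
  (HT : forall k, in_T gf G gam (x k) (z k))
  (Hupd : forall k i, x (S k) i = if I (S k) i then z k i else x k i)
  (Hcyc : exists T : nat, (1 <= T)%nat /\
     forall (k : nat) (i : 'I_N), exists t : nat, (1 <= t <= T)%nat /\ I (k + t)%nat i = true) :
  (* (i) *)
  (exists l, infinite_sum (fun k => bsqnorm (bsub (x k) (z k))) l) /\
  (* (ii) *)
  (exists (phi : nat -> R) (phiz : nat -> R) (Phistar : R),
     (forall k, is_FBE f gf G gam (x k) (phi k)) /\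
     Un_cv phi Phistar /\
     (forall w a, is_minimizer (PhiF f G) w -> PhiF f G w = EFin a -> a <= Phistar) /\
     (forall k, PhiF f G (z k) = EFin (phiz k)) /\
     Un_cv phiz Phistar /\
  (* (iii) *)
     (forall c, cluster_point x c <-> cluster_point z c) /\
     (forall c, cluster_point x c ->
        in_frechet_subdiff (PhiF f G) c (@bzero N n) /\
        PhiF f G c = EFin Phistar /\
        is_FBE f gf G gam c Phistar)).
Proof.
have [_ [Phimin [_ Phimin_lb]]] := Hargmin.
have [T [_ Hwindow]] := Hcyc.
exact: (bc_convergence N n f gf L G gam HN Hgrad HL Hgam HGconvex Phimin Phimin_lb
  x z I HT Hupd T Hwindow HGlsc HGproper).
Qed.
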